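(* Let $k,\ell,n,p,s\in\mathbb{N}$, $W\subset\mathbb{R}^n$, and let $H:\mathbb{R}_{\ge0}\times\mathbb{R}^p\to\mathbb{R}^{s\times n}$ and $A:\mathbb{R}_{\ge0}\times\mathbb{R}^\ell\times\mathbb{R}^k\times\mathbb{R}^p\to\mathbb{R}^{n\times n}$ be continuous. Let $t\mapsto Q(t)\subset\mathbb{R}^\ell$ ($t\ge0$) be a set-valued map with $Q(t)\ne\emptyset$ for all $t$, satisfying the CP. For each $t_0\ge0$ let $\Omega(t_0,W)$ be a nonempty set of continuous functions $(u,y):[t_0,\infty)\to\mathbb{R}^p\times\mathbb{R}^k$ parameterized by $t_0$ and $x_0\in W$. Let $t_0\ge0$, $\tau>0$, $b>a\ge t_0+\tau$ with $b-a<\tau$, and $(u,y)\in\Omega(t_0,W)$. Assume there exist a symmetric positive definite $P\in C^1([a,b];\mathbb{R}^{n\times n})$ and $d\in C^0([a,b];\mathbb{R})$, both strongly causal on $[a,b]$ with respect to $\Omega(t_0,W)$, such that \[ e'P(t)A(t-\tau,q,y_\tau(t),u_\tau(t))e+\tfrac12e'\dot P(t)e\le-d(t)e'P(t)e\quad\forall t\in[a,b],\ e\in\ker H(t-\tau,u_\tau(t)),\ q\in Q(t-\tau), \] and $\operatorname{rank}H(t-\tau,u_\tau(t))<n$ for all $t\in[a,b]$. Then for every $\bar d\in C^0([a,b];\mathbb{R})$, strongly causal on $[a,b]$ with respect to $\Omega(t_0,W)$, with $\bar d(t)<d(t)$ for all $t\in[a,b]$, there exists $\phi\in C^1([a,b];\mathbb{R}_{>0})$,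 strongly causal on $[a,b]$ with respect to $\Omega(t_0,W)$, such that \[ e'P(t)A(t-\tau,q,y_\tau(t),u_\tau(t))e+\tfrac12e'\dot P(t)e\le\phi(t)|H(t-\tau,u_\tau(t))e|^2-\bar d(t)e'P(t)e\quad\forall t\in[a,b],\ e\in\mathbb{R}^n,\ q\in Q(t-\tau). \]
   Context: $g_\tau(t):=g(t-\tau)$ denotes the $\tau$-time shift. A set-valued map $t\mapsto Q(t)$ satisfies the Compactness Property (CP) if whenever $t_\nu\to t$ and $q_\nu\in Q(t_\nu)$, some subsequence $q_{\nu_k}$ converges to some $q\in Q(t)$. A map $t\mapsto a_{u,y}(t)$ defined for $(u,y)\in\Omega(t_0,W)$ and $t\in I$ is strongly causal on $I\cap[\alpha,\beta]$ ($\beta>\alpha\ge t_0$) with respect to $\Omega(t_0,W)$ if for every $t\in I\cap[\alpha,\beta]$ the value $a_{u,y}(t)$ depends only on the restriction $(u,y)|_{[t_0,\alpha)}$. *)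

From HB Require Import structures.
From mathcomp Require Import all_boot all_order all_algebra.
From mathcomp Require Import all_classical all_reals all_analysis.
Set Implicit Arguments. Unset Strict Implicit. Unset Printing Implicit Defensive.
Import Order.TTheory GRing.Theory Num.Theory.
Import numFieldNormedType.Exports.
Local Open Scope classical_set_scope.
Local Open Scope ring_scope.

Definition qf {R : realType} {n : nat} (M : 'M[R]_n) (e : 'cV[R]_n) : R :=
  (e^T *m M *m e) 0 0.

Definition sqnorm {R : realType} {m : nat} (v : 'cV[R]_m) : R :=
  (v^T *m v) 0 0.

Definition CP {R : realType} {l : nat} (Q : R -> set 'rV[R]_l) : Prop :=
  forall (tn : nat -> R) (t : R) (qn : nat -> 'rV[R]_l),
    (forall m, 0 <= tn m) -> 0 <= t ->
    tn @ \oo --> t ->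
    (forall m, Q (tn m) (qn m)) ->
    exists phi : nat -> nat,
      {homo phi : i j / (i < j)%N >-> (i < j)%N} /\
      exists2 q, Q t q & (qn \o phi) @ \oo --> q.

Definition C1_on {R : realType} (a b : R) (f f' : R -> R) : Prop :=
  (forall t, a <= t <= b ->
     (fun h : R => h^-1 * (f (t + h) - f t))
       @ within [set h : R | a <= t + h <= b] ((0 : R)^') --> f' t)
  /\ {within `[a, b], continuous f'}.

Definition C1_mx_on {R : realType} {m n : nat} (a b : R)
  (M Md : R -> 'M[R]_(m, n)) : Prop :=
  forall i j, C1_on a b (fun t => M t i j) (fun t => Md t i j).

(* Strong causality on I /\ [alpha, beta] = [alpha,beta] (here I = [a,b]
   and alpha = a, beta = b) w.r.t. the set Om of input/output pairs on
   [t0, oo): the value at any t in [alpha, beta] depends only on the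
   restriction of (u,y) to [t0, alpha). *)
Definition strongly_causal {R : realType} {p k : nat} {T : Type}
  (t0 alpha beta : R) (Om : set (R -> 'rV[R]_p * 'rV[R]_k))
  (f : (R -> 'rV[R]_p * 'rV[R]_k) -> R -> T) : Prop :=
  forall w1 w2, Om w1 -> Om w2 ->
    (forall r, t0 <= r < alpha -> w1 r = w2 r) ->
    forall t, alpha <= t <= beta -> f w1 t = f w2 t.

From HB Require Import structures.
From mathcomp Require Import all_boot all_order all_algebra.
From mathcomp Require Import all_classical all_reals all_analysis.
From mathcomp Require Import lra.
Import Order.TTheory GRing.Theory Num.Theory.
Import numFieldNormedType.Exports.
Local Open Scope classical_set_scope.
Local Open Scope ring_scope.
Set Implicit Arguments. Unset Strict Implicit. Unset Printing Implicit Defensive.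

(* Fold the dbar-term into the matrix K(t,q) = P A + Pd/2 + dbar P
   ([dissipation_mx]), so that the claim reads e'K(t,q)e <= phi(t) |N(t)e|^2
   with N(t) = H(t-tau, u(t-tau)) ([delayed_output_mx]).
   On ker N(t) the hypothesis together with dbar < d gives e'K(t,q)e < 0.  The
   pairs (K(t,q), N(t)), t in [a,b], q in Q(t-tau), form a sequentially compact
   family (Bolzano-Weierstrass in t, the CP in q, continuity of the data), and
   on such a family strict negativity on the kernels yields one constant c with
   e'Ke <= c |Ne|^2: otherwise unit vectors e_k with e_k'K_k e_k > k |N_k e_k|^2
   would accumulate at some unit e with Ne = 0 and e'Ke >= 0.  Take phi := c. *)

Section matrix_limits.
Context {R : realType} {T : Type} {F : set_system T} {FF : Filter F}.

Lemma cvg_mxP {m n} (X_ : T -> 'M[R]_(m, n)) (X : 'M[R]_(m, n)) :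
  X_ @ F --> X <-> forall i j, (fun x => X_ x i j) @ F --> X i j.
Proof.
split=> [XX i j|XX].
  exact: cvg_comp XX (@coord_continuous R m n i j X).
apply/cvg_mx_entourageP => A entA.
rewrite near_map.
apply: (@filter_forall _ _ (fun i x => forall j, (X i j, X_ x i j) \in A)) => i.
apply: (@filter_forall _ _ (fun j x => (X i j, X_ x i j) \in A)) => j.
move/cvg_entourageP: (XX i j) => /(_ A entA).
by apply: (@filterS _ F) => x /mem_set.
Qed.

Lemma cvg_mulmx {m n p} (X_ : T -> 'M[R]_(m, n)) (Y_ : T -> 'M[R]_(n, p))
    (X : 'M[R]_(m, n)) (Y : 'M[R]_(n, p)) :
  X_ @ F --> X -> Y_ @ F --> Y -> (fun x => X_ x *m Y_ x) @ F --> X *m Y.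
Proof.
move=> /cvg_mxP XX /cvg_mxP YY; apply/cvg_mxP => i j; rewrite mxE.
under eq_cvg do rewrite mxE.
by apply: cvg_big => [|l _]; [exact: add_continuous | exact: cvgM].
Qed.

Lemma cvg_trmx {m n} (X_ : T -> 'M[R]_(m, n)) (X : 'M[R]_(m, n)) :
  X_ @ F --> X -> (fun x => (X_ x)^T) @ F --> X^T.
Proof.
move=> /cvg_mxP XX; apply/cvg_mxP => i j; rewrite mxE.
by under eq_cvg do rewrite mxE; exact: XX.
Qed.

Lemma cvg_qf {n} (M_ : T -> 'M[R]_n) (e_ : T -> 'cV[R]_n) (M : 'M[R]_n) (e : 'cV[R]_n) :
  M_ @ F --> M -> e_ @ F --> e -> (fun x => qf (M_ x) (e_ x)) @ F --> qf M e.
Proof.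
move=> MM ee; rewrite /qf.
by move/cvg_mxP/(_ 0 0): (cvg_mulmx (cvg_mulmx (cvg_trmx ee) MM) ee).
Qed.

Lemma cvg_sqnorm {n} (v_ : T -> 'cV[R]_n) (v : 'cV[R]_n) :
  v_ @ F --> v -> (fun x => sqnorm (v_ x)) @ F --> sqnorm v.
Proof.
by move=> vv; rewrite /sqnorm; move/cvg_mxP/(_ 0 0): (cvg_mulmx (cvg_trmx vv) vv).
Qed.

End matrix_limits.

Section within_continuity.
Context {R : realType}.

Lemma within_continuous_cvgn {T U : topologicalType} (D : set T) (f : T -> U)
    (x_ : nat -> T) (x : T) :
  {within D, continuous f} -> x_ @ \oo --> x -> (forall k, D (x_ k)) -> D x ->
  f \o x_ @ \oo --> f x.
Proof.
move=> /subspace_continuousP fc xx Dx_ Dx; apply: cvg_comp (fc x Dx).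
move=> A /xx [N _ NA]; exists N => // k /NA; exact.
Qed.

Lemma continuous_mx_within {T : topologicalType} {m n} (D : set T)
    (M : T -> 'M[R]_(m, n)) :
  (forall i j, {within D, continuous (fun x => M x i j)}) ->
  {within D, continuous M}.
Proof.
move=> Mc; apply/subspace_continuousP => x Dx; apply/cvg_mxP => i j.
exact: (subspace_continuousP _ _).1 (Mc i j) x Dx.
Qed.

End within_continuity.

Section C1_functions.
Context {R : realType}.

Lemma C1_on_continuous (a b : R) (f f' : R -> R) :
  C1_on a b f f' -> {within `[a, b], continuous f}.
Proof.
move=> [df _]; apply/subspace_continuousP => t; rewrite /= in_itv /= => tab.
move/cvgrPdist_lt/(_ 1 ltr01)/nbhs_ballP: (df t tab) => [del /= del0 q_near].
set C := `|f' t| + 1.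
have C0 : 0 < C by rewrite ltr_pwDr.
apply/cvgrPdist_lt => eps eps0; apply/nbhs_ballP.
exists (Num.min del (eps / C)); first by rewrite /= lt_min del0 divr_gt0.
move=> x; rewrite /ball /= lt_min => /andP[xdel xeps]; rewrite in_itv /= => xab.
have [->|xt] := eqVneq x t; first by rewrite subrr normr0.
(* f x - f t = h * q with q the difference quotient, and |q| < |f' t| + 1 near t *)
set h := x - t.
have xE : x = t + h by rewrite /h addrC subrK.
have h_ball : ball 0 del h by rewrite /ball /= sub0r normrN distrC.
have h0 : h != 0 by rewrite subr_eq0.
have := q_near h h_ball h0; rewrite -xE => /(_ xab) qh.
have qC : `|h^-1 * (f x - f t)| < C.
  by move: (ler_distD (f' t) (h^-1 * (f x - f t)) 0); rewrite /C !subr0 distrC; lra.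
have -> : f t - f x = - (h * (h^-1 * (f x - f t))).
  by rewrite mulrA mulfV ?subr_eq0 // mul1r opprB.
rewrite -(ltr_pM2r C0) mulfVK ?gt_eqF // distrC in xeps.
by rewrite normrN normrM; apply: le_lt_trans xeps; rewrite ler_wpM2l // ltW.
Qed.

Lemma C1_on_cst (a b c : R) : C1_on a b (fun=> c) (fun=> 0).
Proof.
split; last exact/continuous_subspaceT/cst_continuous.
move=> t _; under eq_fun do rewrite subrr mulr0; exact: cvg_cst.
Qed.

End C1_functions.

Section sequential_compactness.
Context {R : realType}.

Lemma increasing_seq_ge (f : nat -> nat) : increasing_seq f -> forall k, (k <= f k)%N.
Proof.
move=> f_incr; elim=> // k ih; rewrite (leq_ltn_trans ih) // ltnNge.
by have := f_incr k.+1 k; rewrite leEnat => ->; rewrite ltnn.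
Qed.

Lemma cvg_subseq {T : topologicalType} (u_ : nat -> T) (f : nat -> nat) (l : T) :
  increasing_seq f -> u_ @ \oo --> l -> u_ \o f @ \oo --> l.
Proof.
move=> /increasing_seq_ge f_ge ul; apply: cvg_comp ul.
by move=> A [N _ NA]; exists N => // k /= Nk; apply: NA; exact: leq_trans Nk (f_ge k).
Qed.

Lemma increasing_seq_comp (f g : nat -> nat) :
  increasing_seq f -> increasing_seq g -> increasing_seq (f \o g).
Proof. by move=> f_incr g_incr m n; rewrite /= f_incr -leEnat g_incr. Qed.

Lemma bounded_fun_le (u_ : nat -> R) (B : R) :
  (forall k, `|u_ k| <= B) -> bounded_fun u_.
Proof.
move=> uB; exists B; split; first exact: num_real.
by move=> M BM k _; exact: le_trans (uB k) (ltW BM).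
Qed.

Definition seq_compact {T : topologicalType} (A : set T) :=
  forall u_ : nat -> T, (forall k, A (u_ k)) ->
  exists2 f : nat -> nat, increasing_seq f & exists2 x, A x & u_ \o f @ \oo --> x.

Lemma seq_compact_itv (a b : R) : seq_compact `[a, b].
Proof.
move=> u_ uab.
have u_bnd : bounded_fun u_.
  apply: (@bounded_fun_le _ (`|a| + `|b|)) => k.
  move: (uab k); rewrite /= in_itv /= ler_norml => /andP[ak kb].
  have := ler_norm b; have := ler_norm (- a); rewrite normrN.
  have := normr_ge0 a; have := normr_ge0 b; move=> *; apply/andP; split; lra.
have [f f_incr /cvg_ex[x ux]] := bolzano_weierstrass u_bnd.
exists f => //; exists x => //.
by apply: (closed_cvg _ (@itv_closed _ R a b) _ x ux); apply: nearW => k; exact: uab.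
Qed.

Lemma seq_compactX {T U : topologicalType} (A : set T) (B : set U) :
  seq_compact A -> seq_compact B -> seq_compact (A `*` B).
Proof.
move=> cA cB u_ uAB.
have [f f_incr [x Ax ux]] := cA (fst \o u_) (fun k => (uAB k).1).
have [g g_incr [y By uy]] := cB (snd \o u_ \o f) (fun k => (uAB (f k)).2).
exists (f \o g); first exact: increasing_seq_comp.
exists (x, y) => //.
rewrite (_ : u_ \o _ = fun k => ((u_ (f (g k))).1, (u_ (f (g k))).2)).
  exact: cvg_pair (cvg_subseq g_incr ux) uy.
by apply/funext => k /=; case: (u_ _).
Qed.

Lemma seq_compact_image {T U : topologicalType} (A : set T) (F : T -> U) :
  seq_compact A ->
  (forall x_ x, (forall k, A (x_ k)) -> A x -> x_ @ \oo --> x ->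
     F \o x_ @ \oo --> F x) ->
  seq_compact (F @` A).
Proof.
move=> cA Fc u_ uFA.
have /choice[x_ x_E] : forall k, exists x, A x /\ F x = u_ k.
  by move=> k; have [x Ax <-] := uFA k; exists x.
have [f f_incr [x Ax xx]] := cA x_ (fun k => (x_E k).1).
exists f => //; exists (F x); first by exists x.
rewrite (_ : u_ \o f = F \o (x_ \o f)); last by apply/funext => k /=; rewrite (x_E _).2.
by apply: Fc xx => // k; exact: (x_E _).1.
Qed.

Lemma bolzano_weierstrass_mx {m n} (u_ : nat -> 'M[R]_(m, n)) (B : R) :
  (forall k i j, `|u_ k i j| <= B) ->
  exists2 f : nat -> nat, increasing_seq f & cvgn (u_ \o f).
Proof.
move=> uB.
suff [f f_incr u_f] : exists2 f : nat -> nat, increasing_seq f &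
    forall ij, ij \in enum {: 'I_m * 'I_n} -> cvgn (fun k => u_ (f k) ij.1 ij.2).
  exists f => //; apply/cvg_ex.
  exists (\matrix_(i, j) limn (fun k => u_ (f k) i j)); apply/cvg_mxP => i j.
  by rewrite mxE; apply: (u_f (i, j)); rewrite mem_enum.
elim: (enum _) => [|ij s [f f_incr u_f]]; first by exists id.
have [g g_incr /cvg_ex[x ux]] :=
  bolzano_weierstrass (bounded_fun_le (fun k => uB (f k) ij.1 ij.2)).
exists (f \o g); first exact: increasing_seq_comp.
move=> ij'; rewrite inE => /predU1P[-> | ij's]; first by apply/cvg_ex; exists x.
by have /cvg_ex[y uy] := u_f ij' ij's; apply/cvg_ex; exists y; exact: cvg_subseq uy.
Qed.

End sequential_compactness.

Section quadratic_forms.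
Context {R : realType}.

Lemma sqnormE {n} (v : 'cV[R]_n) : sqnorm v = \sum_i v i 0 ^+ 2.
Proof. by rewrite /sqnorm mxE; apply: eq_bigr => i _; rewrite mxE expr2. Qed.

Lemma sqnorm_ge0 {n} (v : 'cV[R]_n) : 0 <= sqnorm v.
Proof. by rewrite sqnormE; apply: sumr_ge0 => i _; exact: sqr_ge0. Qed.

Lemma sqnorm_eq0 {n} (v : 'cV[R]_n) : (sqnorm v == 0) = (v == 0).
Proof.
apply/eqP/eqP => [|->]; last by rewrite /sqnorm mulmx0 mxE.
rewrite sqnormE => /(psumr_eq0P (fun i _ => sqr_ge0 (v i 0))) v0.
apply/matrixP => i j.
by rewrite ord1 mxE; apply/eqP; rewrite -sqrf_eq0; apply/eqP/v0.
Qed.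

Lemma sqnorm_entry_le1 {n} (v : 'cV[R]_n) i j : sqnorm v = 1 -> `|v i j| <= 1.
Proof.
rewrite ord1 => v1; have : v i 0 ^+ 2 <= 1.
  by rewrite -v1 sqnormE (bigD1 i) //= lerDl sumr_ge0 // => k _; exact: sqr_ge0.
by move: (v i 0) => x x1; rewrite ler_norml; apply/andP; split; nra.
Qed.

Lemma qfD {n} (M1 M2 : 'M[R]_n) e : qf (M1 + M2) e = qf M1 e + qf M2 e.
Proof. by rewrite /qf mulmxDr mulmxDl mxE. Qed.

Lemma qfZl {n} c (M : 'M[R]_n) e : qf (c *: M) e = c * qf M e.
Proof. by rewrite /qf -scalemxAr -scalemxAl mxE. Qed.

Lemma qfZr {n} (M : 'M[R]_n) c e : qf M (c *: e) = c ^+ 2 * qf M e.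
Proof.
by rewrite /qf linearZ /= [(c *: e)^T]linearZ /= -!scalemxAl !mxE expr2 mulrA.
Qed.

Lemma sqnorm_mulmxZ {m n} (N : 'M[R]_(m, n)) c e :
  sqnorm (N *m (c *: e)) = c ^+ 2 * sqnorm (N *m e).
Proof.
rewrite /sqnorm -scalemxAr [(c *: _)^T]linearZ /= -scalemxAl -scalemxAr.
by rewrite !mxE expr2 mulrA.
Qed.

Lemma qf_le_sqnorm_unit {n s} (K : 'M[R]_n) (N : 'M[R]_(s, n)) (c : R) :
  (forall u, sqnorm u = 1 -> qf K u <= c * sqnorm (N *m u)) ->
  forall e, qf K e <= c * sqnorm (N *m e).
Proof.
move=> Ku e; have [->|e0] := eqVneq e 0.
  by rewrite /qf /sqnorm !mulmx0 !mxE mulr0.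
have e_gt0 : 0 < sqnorm e by rewrite lt_def sqnorm_eq0 e0 sqnorm_ge0.
set r := Num.sqrt (sqnorm e).
have r_gt0 : 0 < r by rewrite sqrtr_gt0.
have -> : e = r *: (r^-1 *: e) by rewrite scalerA mulfV ?gt_eqF // scale1r.
rewrite qfZr sqnorm_mulmxZ mulrCA ler_pM2l ?exprn_gt0 //; apply: Ku.
have := sqnorm_mulmxZ 1%:M r^-1 e; rewrite !mul1mx => ->.
by rewrite exprVn sqr_sqrtr ?sqnorm_ge0 // mulVf ?gt_eqF.
Qed.

Lemma seq_compact_unit_sphere n : seq_compact [set e : 'cV[R]_n | sqnorm e = 1].
Proof.
move=> u_ u1.
have [f f_incr /cvg_ex[e ue]] :=
  bolzano_weierstrass_mx (fun k i j => sqnorm_entry_le1 i j (u1 k)).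
exists f => //; exists e => //=.
apply: (cvg_unique (@Rhausdorff R) (cvg_sqnorm ue)).
by rewrite (_ : (fun k => _) = fun=> 1); [exact: cvg_cst | apply/funext => k; exact: u1].
Qed.

End quadratic_forms.

Lemma finsler_violation_limit {R : realType} {n s} (K_ : nat -> 'M[R]_n)
    (N_ : nat -> 'M[R]_(s, n)) (e_ : nat -> 'cV[R]_n)
    (K : 'M[R]_n) (N : 'M[R]_(s, n)) (e : 'cV[R]_n) :
  K_ @ \oo --> K -> N_ @ \oo --> N -> e_ @ \oo --> e ->
  (forall k, k.+1%:R * sqnorm (N_ k *m e_ k) < qf (K_ k) (e_ k)) ->
  0 <= qf K e /\ N *m e = 0.
Proof.
move=> K_cvg N_cvg e_cvg bad.
have qf_cvg : (fun k => qf (K_ k) (e_ k)) @ \oo --> qf K e by exact: cvg_qf.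
have sq_cvg : (fun k => sqnorm (N_ k *m e_ k)) @ \oo --> sqnorm (N *m e).
  exact/cvg_sqnorm/cvg_mulmx.
have qf_ge0 k : 0 <= qf (K_ k) (e_ k).
  exact: le_trans (mulr_ge0 (ler0n _ _) (sqnorm_ge0 _)) (ltW (bad k)).
split.
  rewrite -(cvg_lim (@Rhausdorff R) qf_cvg).
  by apply: limr_ge; [exact: cvgP qf_cvg | exact: nearW].
apply/eqP; rewrite -sqnorm_eq0; apply/eqP/(cvg_unique (@Rhausdorff R) sq_cvg).
apply: (@squeeze_cvgr _ _ _ _ (fun=> 0) (fun k => qf (K_ k) (e_ k) * harmonic k)).
- by apply: nearW => k; rewrite sqnorm_ge0 /= ler_pdivlMr // mulrC ltW.
- exact: cvg_cst.
- by rewrite -(mulr0 (qf K e)); apply: cvgM qf_cvg cvg_harmonic.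
Qed.

Lemma finsler_uniform {R : realType} {n s} (S : set ('M[R]_n * 'M[R]_(s, n))) :
  seq_compact S ->
  (forall K N e, S (K, N) -> e != 0 -> N *m e = 0 -> qf K e < 0) ->
  exists2 c, 0 < c & forall K N e, S (K, N) -> qf K e <= c * sqnorm (N *m e).
Proof.
move=> cS neg; apply: contrapT => no_c.
have /choice[x_ x_bad] : forall k, exists x : 'M[R]_n * 'M[R]_(s, n) * 'cV[R]_n,
    (S `*` [set e | sqnorm e = 1]) x /\
    k.+1%:R * sqnorm (x.1.2 *m x.2) < qf x.1.1 x.2.
  move=> k; apply: contrapT => all_good; apply: no_c; exists k.+1%:R => // K N e SKN.
  apply: qf_le_sqnorm_unit => u u1; rewrite leNgt; apply/negP => bad.
  by apply: all_good; exists (K, N, u).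
have [f f_incr [[[K N] e] [/= SKN e1] x_f]] :=
  seq_compactX cS (@seq_compact_unit_sphere R n) (fun k => (x_bad k).1).
have KN_cvg : (fun k => (x_ (f k)).1) @ \oo --> (K, N).
  exact: cvg_comp _ _ x_f cvg_fst.
have [qf_ge0 Ne0] : 0 <= qf K e /\ N *m e = 0.
  apply: (@finsler_violation_limit _ _ _ (fun k => (x_ (f k)).1.1)
    (fun k => (x_ (f k)).1.2) (fun k => (x_ (f k)).2)).
  - exact: cvg_comp _ _ KN_cvg cvg_fst.
  - exact: cvg_comp _ _ KN_cvg cvg_snd.
  - exact: cvg_comp _ _ x_f cvg_snd.
  - move=> k; apply: le_lt_trans (x_bad (f k)).2.
    by rewrite ler_wpM2r ?sqnorm_ge0 // ler_nat ltnS increasing_seq_ge.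
have e0 : e != 0 by rewrite -sqnorm_eq0 e1 oner_eq0.
by have := neg K N e SKN e0 Ne0; rewrite ltNge qf_ge0.
Qed.

Lemma seq_compact_delayed_graph {R : realType} {l} (Q : R -> set 'rV[R]_l)
    (tau a b : R) :
  CP Q -> tau <= a -> seq_compact [set z | a <= z.1 <= b /\ Q (z.1 - tau) z.2].
Proof.
move=> CPQ tau_a z_ z_D.
have z_itv j : `[a, b]%classic (z_ j).1 by rewrite /= in_itv; exact: (z_D j).1.
have [f f_incr [t /= /[!in_itv] /= tab tt]] := seq_compact_itv z_itv.
have t_delay_ge0 : 0 <= t - tau.
  by rewrite subr_ge0; case/andP: tab => a_t _; exact: le_trans tau_a a_t.
have delay_ge0 j : 0 <= (z_ (f j)).1 - tau.
  by rewrite subr_ge0; case/andP: (z_D (f j)).1 => + _; exact: le_trans.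
have [phi [/leq_mono phi_incr [q Qq qq]]] :=
  CPQ _ (t - tau) (snd \o z_ \o f) delay_ge0 t_delay_ge0
    (cvgB tt (cvg_cst _)) (fun j => (z_D (f j)).2).
exists (f \o phi); first exact: increasing_seq_comp.
exists (t, q) => //.
rewrite (_ : z_ \o _ = fun j => ((z_ (f (phi j))).1, (z_ (f (phi j))).2)).
  exact: cvg_pair (cvg_subseq phi_incr tt) qq.
by apply/funext => j /=; case: (z_ _).
Qed.

Section delayed_system.
Context {R : realType} {k l n p s : nat}.
Variables (H : R -> 'rV[R]_p -> 'M[R]_(s, n))
  (A : R -> 'rV[R]_l -> 'rV[R]_k -> 'rV[R]_p -> 'M[R]_n)
  (w : R -> 'rV[R]_p * 'rV[R]_k) (t0 tau a b : R)
  (P Pd : R -> 'M[R]_n) (dbar : R -> R).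
Hypotheses
  (Hc : {within [set z : R * 'rV[R]_p | 0 <= z.1], continuous (fun z => H z.1 z.2)})
  (Ac : {within [set z : R * ('rV[R]_l * ('rV[R]_k * 'rV[R]_p)) | 0 <= z.1],
          continuous (fun z => A z.1 z.2.1 z.2.2.1 z.2.2.2)})
  (wc : {within [set r | t0 <= r], continuous w})
  (t0_ge0 : 0 <= t0) (t0_tau_a : t0 + tau <= a)
  (Pc : {within `[a, b], continuous P}) (Pdc : {within `[a, b], continuous Pd})
  (dbarc : {within `[a, b], continuous dbar}).

Definition delayed_output_mx t := H (t - tau) (w (t - tau)).1.

Definition dissipation_mx t q :=
  P t *m A (t - tau) q (w (t - tau)).2 (w (t - tau)).1 + 2^-1 *: Pd t + dbar t *: P t.

Lemma qf_dissipation_mx t q e :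
  qf (dissipation_mx t q) e =
  qf (P t *m A (t - tau) q (w (t - tau)).2 (w (t - tau)).1) e
    + 2^-1 * qf (Pd t) e + dbar t * qf (P t) e.
Proof. by rewrite !qfD !qfZl. Qed.

Lemma qf_dissipation_mx_lt0 (dt : R) t q e :
  qf (P t *m A (t - tau) q (w (t - tau)).2 (w (t - tau)).1) e + 2^-1 * qf (Pd t) e
    <= - dt * qf (P t) e ->
  0 < qf (P t) e -> dbar t < dt -> qf (dissipation_mx t q) e < 0.
Proof.
rewrite qf_dissipation_mx mulNr => dt_bound P_pos dbar_lt.
have : 0 < (dt - dbar t) * qf (P t) e by rewrite mulr_gt0 ?subr_gt0.
by rewrite mulrBl; lra.
Qed.

Section delayed_limits.
Variables (t_ : nat -> R) (t : R).
Hypotheses (t_itv : forall j, `[a, b]%classic (t_ j)) (t_itv' : `[a, b]%classic t)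
  (t_cvg : t_ @ \oo --> t).

Let delay_ge0 x : `[a, b]%classic x -> t0 <= x - tau.
Proof. by rewrite /= in_itv lerBrDr => /andP[ax _]; exact: le_trans ax. Qed.

Let delay_cvg : (fun j => t_ j - tau) @ \oo --> t - tau.
Proof. exact: cvgB t_cvg (cvg_cst _). Qed.

Let w_cvg : (fun j => w (t_ j - tau)) @ \oo --> w (t - tau).
Proof. by apply: within_continuous_cvgn wc delay_cvg _ _ => [j|]; exact: delay_ge0. Qed.

Lemma cvg_delayed_output_mx :
  delayed_output_mx \o t_ @ \oo --> delayed_output_mx t.
Proof.
have z_cvg : (fun j => (t_ j - tau, (w (t_ j - tau)).1)) @ \oo -->
    (t - tau, (w (t - tau)).1) by exact: cvg_pair delay_cvg (cvg_comp _ _ w_cvg cvg_fst).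
have := within_continuous_cvgn Hc z_cvg.
by apply => [j|]; rewrite /= (le_trans t0_ge0) ?delay_ge0.
Qed.

Lemma cvg_dissipation_mx (q_ : nat -> 'rV[R]_l) (q : 'rV[R]_l) :
  q_ @ \oo --> q -> (fun j => dissipation_mx (t_ j) (q_ j)) @ \oo --> dissipation_mx t q.
Proof.
move=> q_cvg.
have z_cvg : (fun j => (t_ j - tau, (q_ j, ((w (t_ j - tau)).2, (w (t_ j - tau)).1))))
    @ \oo --> (t - tau, (q, ((w (t - tau)).2, (w (t - tau)).1))).
  exact: cvg_pair delay_cvg (cvg_pair q_cvg
    (cvg_pair (cvg_comp _ _ w_cvg cvg_snd) (cvg_comp _ _ w_cvg cvg_fst))).
have A_cvg := within_continuous_cvgn Ac z_cvg.
have itv_cvg (T : topologicalType) (f : R -> T) : {within `[a, b], continuous f} ->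
    f \o t_ @ \oo --> f t by move=> fc; exact: within_continuous_cvgn fc t_cvg t_itv t_itv'.
apply: cvgD; first apply: cvgD.
- apply: cvg_mulmx (itv_cvg _ _ Pc) _.
  by apply: A_cvg => [j|]; rewrite /= (le_trans t0_ge0) ?delay_ge0.
- exact: cvgZ (cvg_cst _) (itv_cvg _ _ Pdc).
- exact: cvgZ (itv_cvg _ _ dbarc) (itv_cvg _ _ Pc).
Qed.

End delayed_limits.

Lemma seq_compact_dissipation (Q : R -> set 'rV[R]_l) : CP Q ->
  seq_compact [set (dissipation_mx z.1 z.2, delayed_output_mx z.1) |
               z in [set z | a <= z.1 <= b /\ Q (z.1 - tau) z.2]].
Proof.
move=> CPQ; apply: seq_compact_image (seq_compact_delayed_graph CPQ _) _.
  by rewrite -(lerD2l t0) (le_trans t0_tau_a) // lerDr.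
move=> z_ z z_D [zab _] z_cvg.
have t_cvg : (fun j => (z_ j).1) @ \oo --> z.1 by exact: cvg_comp _ _ z_cvg cvg_fst.
have q_cvg : (fun j => (z_ j).2) @ \oo --> z.2 by exact: cvg_comp _ _ z_cvg cvg_snd.
have t_itv j : `[a, b]%classic (z_ j).1 by rewrite /= in_itv; exact: (z_D j).1.
have t_itv' : `[a, b]%classic z.1 by rewrite /= in_itv.
exact: cvg_pair (cvg_dissipation_mx t_itv t_itv' t_cvg q_cvg)
  (cvg_delayed_output_mx t_itv t_itv' t_cvg).
Qed.

End delayed_system.

Theorem lemma3p4 (R : realType) (k l n p s : nat) (W : set 'rV[R]_n)
  (H : R -> 'rV[R]_p -> 'M[R]_(s, n))
  (A : R -> 'rV[R]_l -> 'rV[R]_k -> 'rV[R]_p -> 'M[R]_n)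
  (Q : R -> set 'rV[R]_l)
  (Om : R -> set 'rV[R]_n -> set (R -> 'rV[R]_p * 'rV[R]_k))
  (t0 tau a b : R) (w : R -> 'rV[R]_p * 'rV[R]_k)
  (P : (R -> 'rV[R]_p * 'rV[R]_k) -> R -> 'M[R]_n) (Pd : R -> 'M[R]_n)
  (d : (R -> 'rV[R]_p * 'rV[R]_k) -> R -> R) :
  {within [set z : R * 'rV[R]_p | 0 <= z.1], continuous (fun z => H z.1 z.2)} ->
  {within [set z : R * ('rV[R]_l * ('rV[R]_k * 'rV[R]_p)) | 0 <= z.1],
     continuous (fun z => A z.1 z.2.1 z.2.2.1 z.2.2.2)} ->
  (forall t, 0 <= t -> Q t !=set0) ->
  CP Q ->
  (forall t1, 0 <= t1 -> Om t1 W !=set0) ->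
  (forall t1 v, 0 <= t1 -> Om t1 W v -> {within [set r | t1 <= r], continuous v}) ->
  0 <= t0 -> 0 < tau -> t0 + tau <= a -> a < b -> b - a < tau ->
  Om t0 W w ->
  (* P symmetric positive definite and C^1 on [a,b], with derivative Pd *)
  (forall t, a <= t <= b -> (P w t)^T = P w t) ->
  (forall t e, a <= t <= b -> e != 0 -> 0 < qf (P w t) e) ->
  C1_mx_on a b (P w) Pd ->
  {within `[a, b], continuous (d w)} ->
  strongly_causal t0 a b (Om t0 W) P ->
  strongly_causal t0 a b (Om t0 W) d ->
  (forall t e q, a <= t <= b ->
     H (t - tau) (w (t - tau)).1 *m e = 0 ->
     Q (t - tau) q ->
     qf (P w t *m A (t - tau) q (w (t - tau)).2 (w (t - tau)).1) e
       + 2^-1 * qf (Pd t) e <= - d w t * qf (P w t) e) ->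
  (forall t, a <= t <= b -> leq (\rank (H (t - tau) (w (t - tau)).1)).+1 n) ->
  forall dbar : (R -> 'rV[R]_p * 'rV[R]_k) -> R -> R,
    {within `[a, b], continuous (dbar w)} ->
    strongly_causal t0 a b (Om t0 W) dbar ->
    (forall t, a <= t <= b -> dbar w t < d w t) ->
    exists phi : (R -> 'rV[R]_p * 'rV[R]_k) -> R -> R,
      strongly_causal t0 a b (Om t0 W) phi /\
      (exists phid : R -> R, C1_on a b (phi w) phid) /\
      (forall t, a <= t <= b -> 0 < phi w t) /\
      (forall t e q, a <= t <= b -> Q (t - tau) q ->
         qf (P w t *m A (t - tau) q (w (t - tau)).2 (w (t - tau)).1) e
           + 2^-1 * qf (Pd t) e
         <= phi w t * sqnorm (H (t - tau) (w (t - tau)).1 *m e)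
            - dbar w t * qf (P w t) e).
Proof.
move=> Hc Ac _ CPQ _ wc t0_ge0 _ t0_tau_a _ _ w_Om _ P_pos P_C1 _ _ _ kernel_neg _
  dbar dbar_c _ dbar_lt.
have Pc : {within `[a, b], continuous P w}.
  by apply: continuous_mx_within => i j; exact: C1_on_continuous (P_C1 i j).
have Pdc : {within `[a, b], continuous Pd}.
  by apply: continuous_mx_within => i j; exact: (P_C1 i j).2.
have [|c c_gt0 c_bound] := finsler_uniform (seq_compact_dissipation Hc Ac
    (wc t0 w t0_ge0 w_Om) t0_ge0 t0_tau_a Pc Pdc dbar_c CPQ).
  move=> _ _ e [z [zab Qz] [<- <-]] e0 He.
  exact: qf_dissipation_mx_lt0 (kernel_neg _ _ _ zab He Qz) (P_pos _ _ zab e0) (dbar_lt _ zab).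
exists (fun _ _ => c); split=> //; split; first by exists (fun=> 0); exact: C1_on_cst.
split=> // t e q tab Qq.
have := c_bound _ _ e (ex_intro2 _ _ (t, q) (conj tab Qq) erefl).
rewrite qf_dissipation_mx; lra.
Qed.
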